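(* Let $f(z)=z\big(1+\sum_{n\ge1}c_nz^n\big)$ be holomorphic and univalent in the unit disc. For $p\ge0$ define coefficients $A_n^p$ ($n\ge1$) by $$z^{1-p}f'(z)+\Lambda_p(f(z))=\sum_{n\ge1}A_n^pz^{n+1}.$$ Then, as an identity of holomorphic functions of $(u,v)$ near $(0,0)$ (equivalently of formal power series in $u,v$), $$\sum_{k\ge1}\sum_{p\ge0}A_k^p\,u^pv^k=\frac{u^2f'(u)^2}{f(u)^2}\,\frac{f(v)^2}{v\,[f(u)-f(v)]}+\frac{vf'(v)}{v-u},$$ where the right-hand side is understood via its holomorphic extension across the diagonal $u=v$ and across $u=0$, $v=0$.
   Context: For $p\ge0$, $\Lambda_p$ denotes the unique function of the form $\Lambda_p(u)=-u^{1-p}+\sum_{j=0}^{p-1}\alpha_ju^{1-j}$ (constants $\alpha_j$ depending on $f$) such that the Laurent expansion at $z=0$ of $z^{1-p}f'(z)+\Lambda_p(f(z))$ contains only powers $z^n$ with $n\ge2$. *)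

From HB Require Import structures.
From mathcomp Require Import all_boot all_order all_algebra.
Set Implicit Arguments. Unset Strict Implicit. Unset Printing Implicit Defensive.
Import Order.TTheory GRing.Theory Num.Theory.
Local Open Scope ring_scope.

Section Defs.
Variable K : fieldType.

Definition ps := nat -> K.

Definition ps_one : ps := fun n => if n == 0%N then 1 else 0.

Definition ps_mul (s t : ps) : ps := fun n => \sum_(i < n.+1) s i * t (n - i)%N.

Definition ps_pow (s : ps) (m : nat) : ps := iter m (ps_mul s) ps_one.

Fixpoint ps_inv_seq (s : ps) (n : nat) : seq K :=
  match n with
  | 0 => [:: (s 0%N)^-1]
  | n'.+1 => let b := ps_inv_seq s n' in
             rcons b (- (s 0%N)^-1 * \sum_(i < n'.+1) s i.+1 * nth 0 b (n' - i)%N)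
  end.

Definition ps_inv (s : ps) : ps := fun n => nth 0 (ps_inv_seq s n) n.

Definition ps_zpow (s : ps) (m : int) : ps :=
  match m with Posz k => ps_pow s k | Negz k => ps_pow (ps_inv s) k.+1 end.

Definition ps_deriv (s : ps) : ps := fun n => s n.+1 *+ n.+1.

(* coefficient of z^n (n : int) in the Laurent series z^e * s(z) *)
Definition lcoef (e : int) (s : ps) (n : int) : K :=
  match n - e with Posz k => s k | Negz _ => 0 end.

(* f(z) = z * phi(z) with phi(z) = 1 + sum_{n>=1} c_n z^n  (c 0 is unused) *)
Definition phi_ps (c : nat -> K) : ps := fun n => if n is 0%N then 1 else c n.
Definition f_ps (c : nat -> K) : ps :=
  fun n => match n with 0%N => 0 | 1%N => 1 | k.+1 => c k end.

(* coefficient of z^n in the Laurent series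
     z^{1-p} f'(z) + Lambda_p(f(z)),
   Lambda_p(u) = -u^{1-p} + sum_{j<p} alpha_j u^{1-j},
   using f(z)^m = z^m phi(z)^m for m : int. *)
Definition L_coef (c : nat -> K) (p : nat) (alpha : nat -> K) (n : int) : K :=
  lcoef (1 - p%:Z) (ps_deriv (f_ps c)) n
  - lcoef (1 - p%:Z) (ps_zpow (phi_ps c) (1 - p%:Z)) n
  + \sum_(j < p) alpha j * lcoef (1 - (j : nat)%:Z) (ps_zpow (phi_ps c) (1 - (j : nat)%:Z)) n.

(* alpha_0..alpha_{p-1} define Lambda_p: the expansion has only powers z^n, n >= 2 *)
Definition Lambda_spec (c : nat -> K) (p : nat) (alpha : nat -> K) : Prop :=
  forall n : int, n <= 1 -> L_coef c p alpha n = 0.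

Definition Acoef (c : nat -> K) (p : nat) (alpha : nat -> K) (n : nat) : K :=
  L_coef c p alpha (n.+1)%:Z.

(* ---------- two-variable formal power series: S i j = coeff of u^i v^j ---------- *)
Definition bps := nat -> nat -> K.

Definition bmul (S T : bps) : bps := fun i j =>
  \sum_(a < i.+1) \sum_(b < j.+1) S a b * T (i - a)%N (j - b)%N.
Definition badd (S T : bps) : bps := fun i j => S i j + T i j.
Definition bsub (S T : bps) : bps := fun i j => S i j - T i j.
Definition inU (s : ps) : bps := fun i j => if j == 0%N then s i else 0.
Definition inV (s : ps) : bps := fun i j => if i == 0%N then s j else 0.
Definition ps_X : ps := fun n => if n == 1%N then 1 else 0.
Definition bU : bps := inU ps_X.
Definition bV : bps := inV ps_X.

Definition Agen (c : nat -> K) (alpha : nat -> nat -> K) : bps :=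
  fun p k => if k == 0%N then 0 else Acoef c p (alpha p) k.

End Defs.

From HB Require Import structures.
From mathcomp Require Import all_boot all_order all_algebra ring.
From mathcomp Require Import boolp.
Set Implicit Arguments. Unset Strict Implicit. Unset Printing Implicit Defensive.
Import GRing.Theory Num.Theory.
Local Open Scope ring_scope.

(* Write f = z phi with phi(0) = 1.

   Multiplying the Laurent series z^(1-p) f' + Lambda_p(f) by z^(p-1) gives
   the "row" f' - phi^(1-p) + sum_(j<p) al_j z^(p-j) phi^(1-j), and A_k^p is
   its coefficient of z^(k+p).  The normalization of Lambda_p says that this
   row has no coefficient of z^0..z^p.  Since the series z^(p-j) phi^(1-j),
   j < p, are triangular, a combination of them is determined by its
   coefficients of z^1..z^p; hence the row is the unique series of the form
   f' - phi^(1-p) + (span) vanishing to order p.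

   The closed form v M(u, v) of the right-hand side gives, after the
   substitution u -> u v, a series G(u, v) whose row p vanishes to order p;
   G - f'(v)/(1 - u) satisfies (G - f'(v)/(1-u)) Q = -g(u v) phi(v)^2 with
   Q = phi(v) - u phi(u v), and solving this row by row shows that row p of G
   has the required shape.  So the rows coincide, the generating function of
   the A_k^p is v M(u, v), and the theorem is the closed form with its
   denominators cleared. *)

(* Formal power series over R, as coefficient functions: s n is the
   coefficient of z^n.  Equality and choice come from classical logic. *)
Definition pser (R : Type) : Type := nat -> R.
HB.instance Definition _ (R : choiceType) := Choice.on (pser R).

Section PowerSeriesRing.
Variable R : comNzRingType.
Implicit Types s t r : pser R.

Definition padd s t : pser R := fun n => s n + t n.
Definition popp s : pser R := fun n => - s n.
Definition pzero : pser R := fun _ => 0.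
Definition pone : pser R := fun n => if n == 0%N then 1 else 0.
Definition pmul s t : pser R := fun n => \sum_(i < n.+1) s i * t (n - i)%N.

Lemma paddA : associative padd.
Proof. by move=> s t r; apply: funext => n; apply: addrA. Qed.
Lemma paddC : commutative padd.
Proof. by move=> s t; apply: funext => n; apply: addrC. Qed.
Lemma padd0 : left_id pzero padd.
Proof. by move=> s; apply: funext => n; apply: add0r. Qed.
Lemma paddN : left_inverse pzero popp padd.
Proof. by move=> s; apply: funext => n; apply: addNr. Qed.
HB.instance Definition _ := GRing.isZmodule.Build (pser R) paddA paddC padd0 paddN.

Lemma pmul_rev s t n : pmul s t n = \sum_(j < n.+1) s (n - j)%N * t j.
Proof.
rewrite /pmul (reindex_inj rev_ord_inj) /=.
by apply: eq_bigr => j _; rewrite (sub_ordK j).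
Qed.

Lemma pmulA : associative pmul.
Proof.
move=> p q r; apply: funext => i; rewrite [RHS]pmul_rev {1}/pmul.
pose term j k := p j * (q (i - j - k)%N * r k).
transitivity (\sum_(j < i.+1) \sum_(k < i.+1 | (k <= i - j)%N) term j k).
  apply: eq_bigr => /= j _; rewrite pmul_rev big_distrr /=.
  by rewrite (big_ord_narrow_leq (leq_subr _ _)).
rewrite (exchange_big_dep predT) //=; apply: eq_bigr => k _.
transitivity (\sum_(j < i.+1 | (j <= i - k)%N) term j k).
  apply: eq_bigl => j; rewrite -ltnS -(ltnS j) -!subSn ?leq_ord //.
  by rewrite -subn_gt0 -(subn_gt0 j) -!subnDA addnC.
rewrite (big_ord_narrow_leq (leq_subr _ _)) /pmul big_distrl /=.
by apply: eq_bigr => j _; rewrite /term -!subnDA addnC mulrA.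
Qed.

Lemma pmulC : commutative pmul.
Proof.
move=> s t; apply: funext => n; rewrite pmul_rev /pmul.
by apply: eq_bigr => j _; rewrite mulrC.
Qed.

Lemma pmul1 : left_id pone pmul.
Proof.
move=> s; apply: funext => n; rewrite /pmul big_ord_recl subn0.
by rewrite big1 => [|j _]; rewrite /pone /= ?mul1r ?mul0r ?addr0.
Qed.

Lemma pmulDl : left_distributive pmul padd.
Proof.
move=> s t r; apply: funext => n; rewrite /pmul /padd -big_split.
by apply: eq_bigr => j _; rewrite mulrDl.
Qed.

Lemma pone_neq0 : pone != 0.
Proof.
apply/eqP => /(congr1 (fun s : pser R => s 0%N)); rewrite /pone /=.
by move/eqP; rewrite oner_eq0.
Qed.

HB.instance Definition _ :=
  GRing.Zmodule_isComNzRing.Build (pser R) pmulA pmulC pmul1 pmulDl pone_neq0.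

Lemma pcoefD s t n : (s + t) n = s n + t n. Proof. by []. Qed.
Lemma pcoefN s n : (- s) n = - s n. Proof. by []. Qed.
Lemma pcoefB s t n : (s - t) n = s n - t n. Proof. by []. Qed.
Lemma pcoef1 n : (1 : pser R) n = if n == 0%N then 1 else 0. Proof. by []. Qed.
Lemma pcoefM s t n : (s * t) n = \sum_(i < n.+1) s i * t (n - i)%N. Proof. by []. Qed.

Lemma pcoefM0 s t : (s * t) 0%N = s 0%N * t 0%N.
Proof. by rewrite pcoefM big_ord1. Qed.

Definition pcoef (n : nat) (s : pser R) : R := s n.
HB.instance Definition _ n :=
  GRing.isNmodMorphism.Build (pser R) R (pcoef n) (erefl, fun _ _ => erefl).

Lemma pcoef_sum (I : Type) (r : seq I) (P : pred I) (F : I -> pser R) n :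
  (\sum_(i <- r | P i) F i) n = \sum_(i <- r | P i) F i n.
Proof. exact: (raddf_sum (pcoef n)). Qed.

Definition pconst (s : pser R) : R := s 0%N.
HB.instance Definition _ :=
  GRing.isNmodMorphism.Build (pser R) R pconst (erefl, fun _ _ => erefl).
Lemma pconst_is_monoid_morphism : monoid_morphism pconst.
Proof. by split=> // s t; rewrite /pconst pcoefM0. Qed.
HB.instance Definition _ :=
  GRing.isMonoidMorphism.Build (pser R) R pconst pconst_is_monoid_morphism.

Definition pC (a : R) : pser R := fun n => if n == 0%N then a else 0.

Lemma pcoefCM a s n : (pC a * s) n = a * s n.
Proof.
rewrite pcoefM big_ord_recl /= subn0 big1 ?addr0 // => i _.
by rewrite /pC /= mul0r.
Qed.

Lemma pC_is_zmod_morphism : (pC 0 = 0) * {morph pC : a b / a + b}.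
Proof.
split; first by apply: funext => n; rewrite /pC if_same.
move=> a b; apply: funext => n; rewrite pcoefD /pC.
by case: (n == 0%N); rewrite ?addr0.
Qed.
HB.instance Definition _ := GRing.isNmodMorphism.Build R (pser R) pC pC_is_zmod_morphism.

Lemma pC_is_monoid_morphism : monoid_morphism pC.
Proof.
split=> // a b; apply: funext => n.
by rewrite pcoefCM /pC; case: (n == 0%N); rewrite ?mulr0.
Qed.
HB.instance Definition _ := GRing.isMonoidMorphism.Build R (pser R) pC pC_is_monoid_morphism.

Definition pX : pser R := fun n => if n == 1%N then 1 else 0.

Lemma pcoefX n : (pX : pser R) n = if n == 1%N then 1 else 0. Proof. by []. Qed.

Lemma pcoefXM s n : (pX * s) n = if n is k.+1 then s k else 0.
Proof.
case: n => [|n]; rewrite pcoefM; first by rewrite big_ord1 /pX /= mul0r.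
rewrite big_ord_recl big_ord_recl big1 => [|i _]; last by rewrite /pX /= mul0r.
by rewrite /pX /= mul0r mul1r add0r addr0 subSS subn0.
Qed.

Lemma pcoefXnM m s n : (pX ^+ m * s) n = if (m <= n)%N then s (n - m)%N else 0.
Proof.
elim: m n => [|m IH] n; first by rewrite expr0 mul1r subn0.
by rewrite exprS -mulrA pcoefXM; case: n => [|n] //; rewrite IH ltnS subSS.
Qed.

Lemma mulpX_inj : injective (fun s => pX * s).
Proof.
move=> s t /= st; apply: funext => n.
by move/(congr1 (fun w : pser R => w n.+1)): st; rewrite !pcoefXM.
Qed.

Definition pderiv s : pser R := fun n => s n.+1 *+ n.+1.

End PowerSeriesRing.
Arguments pX {R}.

Section PowerSeriesUnits.
Variable R : comUnitRingType.
Implicit Types s t : pser R.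

Fixpoint pinv_seq s (n : nat) : seq R :=
  match n with
  | 0 => [:: (s 0%N)^-1]
  | n'.+1 => let b := pinv_seq s n' in
             rcons b (- (s 0%N)^-1 * \sum_(i < n'.+1) s i.+1 * nth 0 b (n' - i)%N)
  end.
Definition pinv s : pser R := fun n => nth 0 (pinv_seq s n) n.

Lemma size_pinv_seq s n : size (pinv_seq s n) = n.+1.
Proof. by elim: n => [|n IH] //=; rewrite size_rcons IH. Qed.

Lemma nth_pinv_seq s n k : (k <= n)%N -> nth 0 (pinv_seq s n) k = pinv s k.
Proof.
elim: n => [|n IH]; first by rewrite leqn0 => /eqP ->.
rewrite leq_eqVlt => /orP [/eqP -> //|]; rewrite ltnS => kn /=.
by rewrite nth_rcons size_pinv_seq ltnS kn IH.
Qed.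

(* The coefficient of z^(n+1) in s * pinv s is cancelled by the recursion. *)
Lemma pinvK s : s 0%N \is a GRing.unit -> pinv s * s = 1.
Proof.
move=> s0; rewrite mulrC; apply: funext => n; rewrite pcoef1; case: n => [|n] /=.
  by rewrite pcoefM0 /pinv /= mulrV.
rewrite pcoefM big_ord_recl /= subn0.
have -> : pinv s n.+1 = - (s 0%N)^-1 * \sum_(i < n.+1) s i.+1 * pinv s (n - i)%N.
  rewrite /pinv /= nth_rcons size_pinv_seq ltnn eqxx; congr (_ * _).
  by apply: eq_bigr => i _; rewrite nth_pinv_seq // leq_subr.
rewrite mulrA mulrN mulrV // mulN1r.
rewrite [X in - X + _](_ : _ = \sum_(i < n.+1) s (bump 0 i) * pinv s (n.+1 - bump 0 i)%N).
  by rewrite addNr.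
by apply: eq_bigr => i _; rewrite /bump /= add1n subSS.
Qed.

Definition punit : pred (pser R) := fun s => s 0%N \is a GRing.unit.
Definition pinvr s : pser R := if s 0%N \is a GRing.unit then pinv s else s.

Lemma pinvr_left : {in punit, left_inverse 1 pinvr *%R}.
Proof.
by move=> s s0; have s0u : s 0%N \is a GRing.unit := s0; rewrite /pinvr s0u pinvK.
Qed.

Lemma punit_left s t : t * s = 1 -> punit s.
Proof.
move/(congr1 (fun w : pser R => w 0%N)); rewrite pcoefM0 pcoef1 /= => ts.
by apply/unitrPr; exists (t 0%N); rewrite mulrC.
Qed.

Lemma pinvr_out : {in [predC punit], pinvr =1 id}.
Proof. by move=> s; rewrite inE /= => s0; rewrite /pinvr ifF //; apply/negbTE. Qed.

HB.instance Definition _ :=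
  GRing.ComNzRing_hasMulInverse.Build (pser R) pinvr_left punit_left pinvr_out.

Lemma unit_pserE s : (s \is a GRing.unit) = (s 0%N \is a GRing.unit).
Proof. by []. Qed.

End PowerSeriesUnits.

(* Power series in two variables u, v are series in u whose coefficients are
   series in v: S i j is the coefficient of u^i v^j. *)
Section Bivariate.
Variable R : comNzRingType.
Local Notation P := (pser R).
Local Notation P2 := (pser (pser R)).
Local Notation x := (pX : P).
Local Notation u := (pX : P2).
Local Notation v := (pC pX : P2).
Implicit Types s t : P.
Implicit Types S T : P2.

Lemma pcoef_vM S n : (v * S) n = x * S n.
Proof. exact: pcoefCM. Qed.

Lemma mulv_inj : injective (fun S => v * S).
Proof.
move=> S T /= ST; apply: funext => n; apply: mulpX_inj.
by move/(congr1 (fun W : P2 => W n)): ST; rewrite /= !pcoef_vM.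
Qed.

Definition plift s : P2 := fun n => pC (s n).

Lemma plift_is_zmod_morphism : (plift 0 = 0) * {morph plift : s t / s + t}.
Proof.
split; first by apply: funext => n; rewrite /plift rmorph0.
by move=> s t; apply: funext => n; rewrite /plift pcoefD rmorphD.
Qed.
HB.instance Definition _ := GRing.isNmodMorphism.Build P P2 plift plift_is_zmod_morphism.

Lemma plift_is_monoid_morphism : monoid_morphism plift.
Proof.
split.
  by apply: funext => n; rewrite /plift !pcoef1; case: (n == 0%N); rewrite ?rmorph1 ?rmorph0.
move=> s t; apply: funext => n; rewrite /plift !pcoefM rmorph_sum.
by apply: eq_bigr => i _; rewrite rmorphM.
Qed.
HB.instance Definition _ := GRing.isMonoidMorphism.Build P P2 plift plift_is_monoid_morphism.

Lemma plift_X : plift x = u.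
Proof. by apply: funext => n; rewrite /plift /pX; case: (n == 1%N); rewrite ?rmorph0. Qed.

(* The substitution u -> u v, i.e. S(u, v) -> S(u v, v): row n is
   multiplied by v^n.  It is a ring morphism fixing the series in v. *)
Definition psig S : P2 := fun n => x ^+ n * S n.

Lemma psig_is_zmod_morphism : (psig 0 = 0) * {morph psig : S T / S + T}.
Proof.
split; first by apply: funext => n; rewrite /psig /= mulr0.
by move=> S T; apply: funext => n; rewrite /psig !pcoefD mulrDr.
Qed.
HB.instance Definition _ := GRing.isNmodMorphism.Build P2 P2 psig psig_is_zmod_morphism.

Lemma psig_is_monoid_morphism : monoid_morphism psig.
Proof.
split.
  by apply: funext => n; rewrite /psig !pcoef1; case: n => [|n] /=; rewrite ?mulr1 ?mulr0.
move=> S T; apply: funext => n; rewrite /psig !pcoefM big_distrr; apply: eq_bigr => i _ /=.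
by rewrite mulrACA -exprD subnKC // -ltnS.
Qed.
HB.instance Definition _ := GRing.isMonoidMorphism.Build P2 P2 psig psig_is_monoid_morphism.

Lemma psig_C s : psig (pC s) = pC s.
Proof.
by apply: funext => n; rewrite /psig /pC; case: n => [|n] /=; rewrite ?mul1r ?mulr0.
Qed.

Lemma psig_X : psig u = u * v.
Proof.
apply: funext => n; rewrite /psig (mulrC u) pcoef_vM !pcoefX.
by case: n => [|[|n]] /=; rewrite ?mulr0 ?expr1 ?mulr1.
Qed.

Lemma psig_vu : psig (v - u) = v * (1 - u).
Proof. by rewrite rmorphB /= psig_C psig_X mulrBr mulr1 mulrC. Qed.

(* rows s = s(v) / (1 - u): every row equals s. *)
Definition rows s : P2 := fun _ => s.

Lemma rows_mul1u s : rows s * (1 - u) = pC s.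
Proof.
apply: funext => n; rewrite mulrBr mulr1 pcoefB mulrC pcoefXM /rows /pC.
by case: n => [|n] /=; rewrite ?subr0 ?subrr.
Qed.

Lemma pcoef_vuM S i j : ((v - u) * S) i j =
  (if j is j'.+1 then S i j' else 0) - (if i is i'.+1 then S i' j else 0).
Proof. by rewrite mulrBl pcoefB pcoefB pcoef_vM pcoefXM pcoefXM; case: i. Qed.

(* Divided difference dq s = (s(v) - s(u)) / (v - u), and its expansion
   along the diagonal: dq s = s'(u) + (v - u) dq2 s. *)
Definition dq s : P2 := fun i j => s (i + j + 1)%N.
Definition dq2 s : P2 := fun i j => s (i + j + 2)%N *+ i.+1.

Lemma dqE s : (v - u) * dq s = pC s - plift s.
Proof.
apply: funext => i; apply: funext => j.
rewrite pcoef_vuM pcoefB pcoefB /plift /pC /dq.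
case: i => [|i]; case: j => [|j] /=; rewrite ?subrr ?subr0 //.
- by rewrite add0n addn1.
- by rewrite addn0 addn1.
- by rewrite addSn !addnS addn0 subrr.
Qed.

Lemma dq_diag s : dq s = plift (pderiv s) + (v - u) * dq2 s.
Proof.
apply: funext => i; apply: funext => j.
rewrite !pcoefD pcoef_vuM /plift /pderiv /pC /dq /dq2.
case: i => [|i]; case: j => [|j] /=;
  rewrite ?addSn ?addnS ?add0n ?addn0 ?addn1 ?addn2 ?add0r ?subr0 ?addr0 //.
all: by rewrite mulrS addrK.
Qed.

End Bivariate.

Section Shapes.
Variable R : comUnitRingType.
Variable phi : pser R.
Hypothesis phi0 : phi 0%N = 1.
Local Notation P := (pser R).
Local Notation P2 := (pser (pser R)).
Local Notation x := (pX : P).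
Local Notation u := (pX : P2).

Lemma phi_unit : phi \is a GRing.unit.
Proof. by rewrite unit_pserE phi0 unitr1. Qed.

Lemma pcoef_phiz0 (n : int) : (phi ^ n) 0%N = 1.
Proof.
rewrite -[LHS]/(pconst _) rmorphXz ?phi_unit //.
by change (phi 0%N ^ n = 1); rewrite phi0 exp1rz.
Qed.

Lemma pcoef_phiX0 (n : nat) : (phi ^+ n) 0%N = 1.
Proof. exact: (pcoef_phiz0 n). Qed.

(* The basis functions e(p, m) = z^(p-m) phi^(1-m); for m < p they span the
   space of admissible principal parts of Lambda_p(f(z)), multiplied by z^(p-1). *)
Definition ebas (p m : nat) : P := x ^+ (p - m) * phi ^ (1 - m%:Z).

Definition in_span (p : nat) (y : P) : Prop :=
  exists b : nat -> R, y = \sum_(m < p) pC (b m) * ebas p m.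

Lemma in_span0 p : in_span p 0.
Proof. by exists (fun=> 0); rewrite big1 // => m _; rewrite rmorph0 mul0r. Qed.

Lemma in_spanD p y z : in_span p y -> in_span p z -> in_span p (y + z).
Proof.
move=> [b ->] [b' ->]; exists (fun m => b m + b' m); rewrite -big_split /=.
by apply: eq_bigr => m _; rewrite rmorphD mulrDl.
Qed.

Lemma in_spanZ p a y : in_span p y -> in_span p (pC a * y).
Proof.
move=> [b ->]; exists (fun m => a * b m); rewrite big_distrr /=.
by apply: eq_bigr => m _; rewrite rmorphM mulrA.
Qed.

Lemma in_spanB p y z : in_span p y -> in_span p z -> in_span p (y - z).
Proof.
move=> Hy Hz; apply: in_spanD => //.
by rewrite -mulN1r -(rmorph1 (pC (R := R))) -rmorphN; apply: in_spanZ.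
Qed.

Lemma in_span_sum p n (F : 'I_n -> P) :
  (forall i, in_span p (F i)) -> in_span p (\sum_(i < n) F i).
Proof.
by move=> H; elim/big_ind: _ => //; [apply: in_span0 | move=> ? ?; apply: in_spanD].
Qed.

Lemma in_span_ebas p m : (m < p)%N -> in_span p (ebas p m).
Proof.
move=> mp; exists (fun k => if k == m then 1 else 0).
rewrite (bigD1 (Ordinal mp)) //= eqxx rmorph1 mul1r big1 ?addr0 // => i.
by rewrite -val_eqE /= => /negbTE ->; rewrite rmorph0 mul0r.
Qed.

Lemma ebas_shift a k m : (m <= a)%N ->
  phi^-1 * ebas a m * x ^+ k = ebas (a + k)%N.+1 m.+1.
Proof.
move=> ma; rewrite /ebas subSS -addnBAC // exprD.
have -> : phi ^ (1 - m.+1%:Z) = phi^-1 * phi ^ (1 - m%:Z).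
  by rewrite -exprN1 -exprzDr ?phi_unit // -addn1 PoszD opprD addrA addrC.
ring.
Qed.

Lemma in_span_shift a k y : in_span a y -> in_span (a + k)%N.+1 (phi^-1 * y * x ^+ k).
Proof.
move=> [b ->]; rewrite big_distrr big_distrl /=; apply: in_span_sum => m.
rewrite [X in in_span _ X](_ : _ = pC (b m) * (phi^-1 * ebas a m * x ^+ k)); last by ring.
apply: in_spanZ; rewrite ebas_shift 1?ltnW //.
by apply: in_span_ebas; rewrite ltnS (leq_trans (ltn_ord m)) // leq_addr.
Qed.

(* Triangularity: an element of the span is determined by its coefficients
   of z^1, ..., z^p.  Going from p to p + 1, the coefficient of z forces the
   top coordinate to vanish and the rest is z times an element of span p. *)
Lemma ebasS p m : (m <= p)%N -> ebas p.+1 m = x * ebas p m.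
Proof. by move=> mp; rewrite /ebas mulrA -exprS subSn. Qed.

Lemma in_span_eq0 p y :
  in_span p y -> (forall k, (0 < k <= p)%N -> y k = 0) -> y = 0.
Proof.
elim: p y => [|p IH] y [b ->] yk; first by rewrite big_ord0.
set y' := \sum_(m < p) pC (b m) * ebas p m.
have y'0 : y' 0%N = 0.
  rewrite /y' pcoef_sum big1 // => m _.
  by rewrite pcoefCM /ebas pcoefXnM leqn0 subn_eq0 leqNgt ltn_ord mulr0.
have def_y : \sum_(m < p.+1) pC (b m) * ebas p.+1 m = x * (y' + pC (b p) * ebas p p).
  rewrite big_ord_recr /= mulrDr big_distrr /= ebasS // mulrCA; congr (_ + _).
  by apply: eq_bigr => m _; rewrite ebasS 1?ltnW // mulrCA.
have bp : b p = 0.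
  have := yk 1%N isT; rewrite def_y pcoefXM pcoefD y'0 add0r pcoefCM.
  by rewrite /ebas subnn expr0 mul1r pcoef_phiz0 mulr1.
rewrite def_y bp rmorph0 mul0r addr0 (IH y') ?mulr0 //; first by exists b.
by move=> k /andP [k0 kp]; have := yk k.+1; rewrite def_y pcoefXM bp rmorph0 mul0r addr0 => ->.
Qed.

(* Q(u, v) = (f(v) - f(u v)) / v = phi(v) - u phi(u v), where f = z phi. *)
Definition Qden : P2 := pC phi - u * psig (plift phi).

Lemma Qden_row0 : Qden 0%N = phi.
Proof. by rewrite /Qden pcoefB pcoefXM subr0. Qed.

Lemma Qden_rowS q : Qden q.+1 = - (x ^+ q * pC (phi q)).
Proof. by rewrite /Qden pcoefB pcoefXM /pC /= sub0r. Qed.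

(* Row p of Y Q = - g(u v) phi(v)^2, solved for Y_p: since Q_0 = phi and
   Q_(q+1) = - z^q phi_q, the row Y_p is determined by the earlier rows. *)
Lemma row_recursion (g : P) (Y : P2) :
  Y * Qden = - (psig (plift g) * pC (phi ^+ 2)) ->
  forall p, Y p = - pC (g p) * ebas p 0
    + \sum_(a < p) pC (phi (p - a.+1)%N) * (phi^-1 * Y a * x ^+ (p - a.+1)).
Proof.
move=> YQ p; have iphi : phi^-1 * phi = 1 by rewrite mulVr ?phi_unit.
have Zp : (- (psig (plift g) * pC (phi ^+ 2))) p = - (x ^+ p * pC (g p) * phi ^+ 2).
  by rewrite pcoefN mulrC pcoefCM mulrC.
have := congr1 (fun S : P2 => S p) YQ.
rewrite /= Zp pcoefM big_ord_recr /= subnn Qden_row0 => /(canRL (addKr _)) Yp_phi.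
transitivity (phi^-1 * (Y p * phi)); first by rewrite mulrCA iphi mulr1.
rewrite Yp_phi mulrDr addrC; congr (_ + _).
  rewrite /ebas subn0 subr0 expr1z.
  transitivity (- (x ^+ p * pC (g p) * phi) * (phi^-1 * phi)); first by ring.
  by rewrite iphi; ring.
rewrite -sumrN mulr_sumr; apply: eq_bigr => a _.
by rewrite -(subnSK (ltn_ord a)) Qden_rowS; ring.
Qed.

(* If moreover g(0) = 1, each row Y_p is -phi^(1-p) modulo the span of the
   e(p, m), m < p: by induction, the earlier rows enter the recursion only
   through shifted basis elements, and the top one cancels -phi^(1-p). *)
Lemma row_shape (g : P) (Y : P2) : g 0%N = 1 ->
  Y * Qden = - (psig (plift g) * pC (phi ^+ 2)) ->
  forall p, in_span p (Y p + ebas p p).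
Proof.
move=> g0 /row_recursion rec.
elim/ltn_ind => p IH; case: p IH => [|q] IH.
  by rewrite rec big_ord0 addr0 g0 rmorph1 /ebas mulN1r addNr; apply: in_span0.
pose s (a : nat) := phi^-1 * (Y a + ebas a a) * x ^+ (q - a).
have sY (a : 'I_q.+1) : phi^-1 * Y a * x ^+ (q.+1 - a.+1) = s a - ebas q.+1 a.+1.
  by rewrite subSS /s mulrDr mulrDl ebas_shift // subnKC ?addrK // -ltnS.
have s_span (a : 'I_q.+1) : in_span q.+1 (s a).
  by have := in_span_shift (q - a) (IH a (ltn_ord a)); rewrite subnKC // -ltnS.
rewrite rec (eq_bigr _ (fun a _ => congr1 _ (sY a))).
under eq_bigr do rewrite mulrBr.
rewrite sumrB [X in _ - X]big_ord_recr /= subSS subnn phi0 rmorph1 mul1r.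
rewrite opprD !addrA addrNK.
apply: in_spanB; first apply: in_spanD.
- by rewrite -rmorphN; apply: in_spanZ; apply: in_span_ebas.
- by apply: in_span_sum => a; apply: in_spanZ.
- by apply: in_span_sum => a; apply: in_spanZ; apply: in_span_ebas; rewrite !ltnS.
Qed.

End Shapes.

(* With f = z phi and H = (f(v) - f(u)) / (v - u), put
     W = [f'(v) phi(u)^2 H - f'(u)^2 phi(v)^2] / (v - u),
     M = W / (H phi(u)^2),
   so that v M(u, v) is the right-hand side of the theorem; G = v M(uv, v)
   is its image under u -> u v. *)
Section ClosedForm.
Variable R : comUnitRingType.
Variable phi : pser R.
Hypothesis phi0 : phi 0%N = 1.
Local Notation P := (pser R).
Local Notation P2 := (pser (pser R)).
Local Notation x := (pX : P).
Local Notation u := (pX : P2).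
Local Notation v := (pC pX : P2).

Definition fser : P := x * phi.
Definition dfser : P := pderiv fser.

Lemma dfser0 : dfser 0%N = 1.
Proof. by rewrite /dfser /pderiv /fser pcoefXM phi0. Qed.

Definition Hdq : P2 := dq fser.

Lemma Hdq_row0 : Hdq 0%N = phi.
Proof. by apply: funext => j; rewrite /Hdq /dq add0n addn1 /fser pcoefXM. Qed.

Definition Wnum : P2 :=
  dq dfser * plift (phi ^+ 2) * Hdq + plift dfser * plift (phi ^+ 2) * dq2 fser
  - plift dfser ^+ 2 * dq (phi ^+ 2).

(* W is a genuine power series: the numerator vanishes on the diagonal. *)
Lemma Wnum_spec : (v - u) * Wnum =
  pC dfser * plift (phi ^+ 2) * Hdq - plift dfser ^+ 2 * pC (phi ^+ 2).
Proof.
have pC_dq s : pC s = plift s + (v - u) * dq s by rewrite dqE addrC subrK.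
have dq2E : (v - u) * dq2 fser = Hdq - plift dfser.
  by rewrite /Hdq dq_diag [plift _ + _]addrC addrK.
rewrite [pC dfser]pC_dq [pC (phi ^+ 2)]pC_dq.
transitivity ((v - u) * (dq dfser * plift (phi ^+ 2) * Hdq - plift dfser ^+ 2 * dq (phi ^+ 2))
  + plift dfser * plift (phi ^+ 2) * ((v - u) * dq2 fser)); first by rewrite /Wnum; ring.
by rewrite dq2E; ring.
Qed.

Lemma HL_unit : Hdq * plift (phi ^+ 2) \is a GRing.unit.
Proof.
rewrite !unit_pserE !pcoefM0 Hdq_row0 phi0 /plift /pC /=.
by rewrite pcoef_phiX0 // mul1r unitr1.
Qed.

Definition Jinv : P2 := (Hdq * plift (phi ^+ 2))^-1.
Definition Mgen : P2 := Wnum * Jinv.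
Definition Ggen : P2 := v * psig Mgen.

Lemma Ggen_vanish p k : (k <= p)%N -> Ggen p k = 0.
Proof. by move=> kp; rewrite /Ggen pcoef_vM /psig mulrA -exprS pcoefXnM leqNgt ltnS kp. Qed.

(* (1 - u) H(u v, v) = Q(u, v), since f(v) - f(u v) = v (1 - u) H(u v, v). *)
Lemma Qden_sig : (1 - u) * psig Hdq = Qden phi.
Proof.
have := congr1 (@psig R) (dqE fser).
rewrite -/Hdq rmorphM rmorphB /= !psig_C psig_X rmorphB /= psig_C /fser.
rewrite !rmorphM /= plift_X psig_X => E.
apply: mulv_inj; rewrite /= /Qden; transitivity ((v - u * v) * psig Hdq); first by ring.
by rewrite E; ring.
Qed.

Lemma Ggen_rows : (Ggen - rows dfser) * Qden phi =
  - (psig (plift ((dfser * phi^-1) ^+ 2)) * pC (phi ^+ 2)).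
Proof.
set E := psig (plift (phi ^+ 2)) * (1 - u).
have E_unit : E \is a GRing.unit.
  rewrite /E !unit_pserE !pcoefM0 /psig expr0 mul1r pcoefB pcoefX /plift /pC /=.
  by rewrite pcoefB pcoef1 /= subr0 mulr1 pcoef_phiX0 // unitr1.
have JHL : psig Jinv * psig Hdq * psig (plift (phi ^+ 2)) = 1.
  by rewrite -!(rmorphM (@psig R)) -mulrA mulVr ?HL_unit // rmorph1.
have W_sig : v * (1 - u) * psig Wnum =
    pC dfser * psig (plift (phi ^+ 2)) * psig Hdq - psig (plift dfser) ^+ 2 * pC (phi ^+ 2).
  rewrite -psig_vu -(rmorphM (@psig R)) Wnum_spec rmorphB /=.
  by rewrite !(rmorphM (@psig R)) /= !psig_C expr2.
have g_phi : psig (plift ((dfser * phi^-1) ^+ 2)) * psig (plift (phi ^+ 2)) =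
    psig (plift dfser) ^+ 2.
  rewrite -(rmorphM (@psig R)) -(rmorphM (@plift R)) -exprMn -mulrA mulVr ?phi_unit //.
  by rewrite mulr1 (rmorphXn (@plift R)) (rmorphXn (@psig R)).
(* Multiply by the unit E and abstract the substituted series, so that the
   remaining steps are ring identities between atoms. *)
apply: (mulIr E_unit); rewrite -Qden_sig /E /Ggen /Mgen rmorphM /=.
move: JHL W_sig g_phi (rows_mul1u dfser).
move: (psig Jinv) (psig Hdq) (psig Wnum) (psig (plift (phi ^+ 2))) => sJ sH sW sL.
move: (psig (plift ((dfser * phi^-1) ^+ 2))) (psig (plift dfser)) (rows dfser).
move=> sg sd rd JHL W_sig g_phi rd_mul.
transitivity (v * (1 - u) * sW * (1 - u) * (sJ * sH * sL)
  - rd * (1 - u) * (1 - u) * sH * sL); first by ring.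
rewrite JHL W_sig rd_mul.
transitivity (- (sg * sL) * pC (phi ^+ 2) * (1 - u)); last by ring.
by rewrite g_phi; ring.
Qed.

(* z^(p-1) (z^(1-p) f'(z) + Lambda(f(z))) for a candidate Lambda with
   coefficients al_0, ..., al_(p-1). *)
Definition lrow (p : nat) (al : nat -> R) : P :=
  dfser - ebas phi p p + \sum_(j < p) pC (al j) * ebas phi p j.

Lemma lrow_Ggen p al : (forall k, (k <= p)%N -> lrow p al k = 0) -> lrow p al = Ggen p.
Proof.
move=> lp; apply/eqP; rewrite -subr_eq0; apply/eqP; apply: (in_span_eq0 phi0 (p := p)).
  have -> : lrow p al - Ggen p =
      \sum_(j < p) pC (al j) * ebas phi p j - (Ggen p - dfser + ebas phi p p).
    by rewrite /lrow; ring.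
  apply: in_spanB; last first.
    have := row_shape phi0 _ Ggen_rows p; apply.
    rewrite -[_ 0%N]/(pconst _) rmorphXn rmorphM rmorphV ?phi_unit //=.
    by rewrite /pconst dfser0 phi0 invr1 mulr1 expr1n.
  by apply: in_span_sum => j; apply: in_spanZ; apply: in_span_ebas.
by move=> k /andP [_ kp]; rewrite pcoefB lp // Ggen_vanish // subrr.
Qed.

Lemma lrow_coef p al k : (forall k, (k <= p)%N -> lrow p al k = 0) ->
  lrow p al (k + p)%N.+1 = Mgen p k.
Proof.
move=> /lrow_Ggen ->; rewrite /Ggen pcoef_vM pcoefXM /psig pcoefXnM.
by rewrite leq_addl addnK.
Qed.

Lemma closed_form :
  let fu := plift fser in let fv := pC fser in
  let dfu := plift dfser in let dfv := pC dfser in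
  v * Mgen * (v * ((fu * fu) * ((fu - fv) * (v - u))))
  = u * u * ((dfu * dfu) * ((fv * fv) * (v - u)))
    + v * v * (dfv * ((fu * fu) * (fu - fv))).
Proof.
move=> fu fv dfu dfv.
have fuv : fu - fv = - ((v - u) * Hdq) by rewrite dqE opprB.
rewrite fuv /fu /fv /dfu /dfv /fser (rmorphM (@plift R)) (rmorphM (@pC _)) /= plift_X.
transitivity (- v ^+ 2 * u ^+ 2 * (v - u) * ((v - u) * Wnum)
  * (Jinv * (Hdq * plift (phi ^+ 2)))); first by rewrite /Mgen rmorphXn; ring.
by rewrite mulVr ?HL_unit // Wnum_spec rmorphXn; ring.
Qed.

End ClosedForm.

Section Laurent.
Variable K : fieldType.
Variable c : nat -> K.
Local Notation phi := (phi_ps c : pser K).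
Local Notation x := (pX : pser K).

Lemma f_psE : f_ps c = fser phi.
Proof. by apply: funext => n; rewrite /fser pcoefXM; case: n => [|[|n]]. Qed.

Lemma ps_inv_seqE (s : pser K) n : ps_inv_seq s n = pinv_seq s n.
Proof. by elim: n => [|n IH] //=; rewrite IH. Qed.

Lemma ps_zpowE (n : int) : ps_zpow phi n = phi ^ n.
Proof.
have ps_powE (s : pser K) m : ps_pow s m = s ^+ m.
  by elim: m => [|m IH] //; rewrite exprS -IH.
have invE : ps_inv phi = phi^-1.
  apply: funext => k; rewrite /ps_inv ps_inv_seqE.
  by rewrite [phi^-1]/GRing.inv /= /pinvr unitfE /= oner_eq0.
by case: n => n; rewrite /ps_zpow ps_powE ?invE ?exprVn.
Qed.

Lemma lcoef_shift (s : pser K) p j k : (j <= p)%N ->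
  lcoef (1 - j%:Z) s (k%:Z + 1 - p%:Z) = (x ^+ (p - j) * s) k.
Proof.
move=> jp; rewrite /lcoef pcoefXnM leq_subLR addnC.
have -> : k%:Z + 1 - p%:Z - (1 - j%:Z) = (k + j)%N%:Z - p%:Z.
  by rewrite PoszD; ring.
case: leqP => kjp; first by rewrite subzn // subnBA // addnC.
rewrite -opprB subzn 1?ltnW //.
by rewrite -(@prednK (p - (k + j))%N) ?subn_gt0 // -NegzE.
Qed.

Lemma L_coefE p al k : L_coef c p al (k%:Z + 1 - p%:Z) = lrow phi p al k.
Proof.
rewrite /L_coef /lrow /dfser !lcoef_shift // subnn expr0 !mul1r ps_zpowE -f_psE.
rewrite pcoefD pcoefB pcoef_sum /ebas subnn expr0 mul1r; congr (_ - _ + _).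
apply: eq_bigr => j _; rewrite lcoef_shift 1?ltnW // ps_zpowE.
by rewrite pcoefCM.
Qed.

Lemma Lambda_rows p al : Lambda_spec c p al ->
  forall k, (k <= p)%N -> lrow phi p al k = 0.
Proof.
move=> spec k kp; rewrite -L_coefE spec //.
by rewrite lerBlDr addrC lerD2l lez_nat.
Qed.

Lemma Acoef_row p al k : Acoef c p al k = lrow phi p al (k + p)%N.
Proof.
rewrite /Acoef -L_coefE; congr (L_coef _ _ _ _).
by rewrite PoszD -addn1 PoszD; ring.
Qed.

Lemma Agen_closed (alpha : nat -> nat -> K) :
  (forall p, Lambda_spec c p (alpha p)) ->
  (Agen c alpha : pser (pser K)) = pC x * Mgen phi.
Proof.
move=> spec; apply: funext => p; apply: funext => k.
rewrite pcoef_vM pcoefXM /Agen; case: k => [|k] //=.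
by rewrite Acoef_row addSn lrow_coef //; apply: Lambda_rows.
Qed.

End Laurent.

Section Conversions.
Variable K : fieldType.
Local Notation P2 := (pser (pser K)).

Lemma bmulE (S T : P2) : (bmul S T : P2) = S * T.
Proof.
apply: funext => i; apply: funext => j; rewrite pcoefM pcoef_sum /bmul.
by apply: eq_bigr => a _; rewrite pcoefM.
Qed.

Lemma inVE (s : pser K) : (inV s : P2) = pC s.
Proof. by apply: funext => i; apply: funext => j; rewrite /inV /pC; case: (i == 0%N). Qed.

Lemma bUE : (bU K : P2) = pX.
Proof.
apply: funext => i; apply: funext => j; rewrite /bU /inU /ps_X pcoefX.
by case: (i == 1%N); rewrite ?pcoef1 //; case: (j == 0%N).
Qed.

End Conversions.

Theorem theorem3p1 (K : fieldType) (c : nat -> K) (alpha : nat -> nat -> K) :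
  (forall p : nat, Lambda_spec c p (alpha p)) ->
  let fu := inU (f_ps c) in
  let fv := inV (f_ps c) in
  let dfu := inU (ps_deriv (f_ps c)) in
  let dfv := inV (ps_deriv (f_ps c)) in
  let u := bU K in
  let v := bV K in
  bmul (Agen c alpha)
       (bmul v (bmul (bmul fu fu) (bmul (bsub fu fv) (bsub v u))))
  = badd (bmul (bmul u u) (bmul (bmul dfu dfu) (bmul (bmul fv fv) (bsub v u))))
         (bmul (bmul v v) (bmul dfv (bmul (bmul fu fu) (bsub fu fv)))).
Proof.
move=> spec fu fv dfu dfv u v; rewrite /fu /fv /dfu /dfv /u /v.
rewrite !bmulE !inVE bUE [bV K]inVE Agen_closed // f_psE.
exact: (@closed_form _ (phi_ps c) erefl).
Qed.
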